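(* Let $n$ be a positive integer and $V=\{v_1<v_2<\dots<v_n\}$ a set of $n$ positive integers with $v_n\le n v_1$. Then, with $t=\frac{1}{v_1+v_n}$, one has $\|tv\|\ge\frac{1}{n+1}$ for every $v\in V$; in particular $\kappa(V)\ge\frac{1}{n+1}$. Consequently, for every set $V=\{v_1<\dots<v_n\}$ of positive integers with $n\ge 2$ and every integer $a\ge \frac{v_n-nv_1}{n-1}$, $a\ge 0$, the translate $a+V=\{a+v: v\in V\}$ satisfies $\kappa(a+V)\ge\frac{1}{n+1}$.
   Context: For $x\in\mathbb{R}$, $\|x\|=\min\{x-\lfloor x\rfloor,\lceil x\rceil-x\}$ denotes the distance from $x$ to the nearest integer. For a finite nonempty set $V$ of positive integers, $\kappa(V)=\sup_{t\in(0,1)}\min_{v\in V}\|tv\|$. *)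

From HB Require Import structures.
From mathcomp Require Import all_boot all_order all_algebra.
From mathcomp Require Import all_classical all_reals.
Set Implicit Arguments. Unset Strict Implicit. Unset Printing Implicit Defensive.
Import Order.TTheory GRing.Theory Num.Theory.
Local Open Scope ring_scope.
Local Open Scope classical_set_scope.

Definition dist_int {R : realType} (x : R) : R :=
  Num.min (x - (Num.floor x)%:~R) ((Num.ceil x)%:~R - x).

(* min_{v in V} ||t v||, for V a (nonempty) finite list of positive integers.
   The neutral element 1 is harmless since ||.|| <= 1/2. *)
Definition min_dist {R : realType} (V : seq nat) (t : R) : R :=
  \big[Num.min/1]_(v <- V) dist_int (t * v%:R).

Definition kappa {R : realType} (V : seq nat) : R :=
  sup [set y : R | exists t : R, 0 < t < 1 /\ y = min_dist V t].

Definition posset (V : seq nat) : Prop := sorted ltn V /\ all (fun v => 0 < v)%N V.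

From HB Require Import structures.
From mathcomp Require Import all_boot all_order all_algebra.
From mathcomp Require Import all_classical all_reals.
From mathcomp Require Import lra.
Import Order.TTheory GRing.Theory Num.Theory.
Local Open Scope ring_scope.

(* With t = 1/(v_1 + v_n), both t v and 1 - t v = t (v_1 + v_n - v) are at least
   t v_1 = v_1/(v_1 + v_n) >= v_1/((n+1) v_1) = 1/(n+1) as soon as v_n <= n v_1.
   Translating V by a >= (v_n - n v_1)/(n - 1) restores v_n <= n v_1. *)

Lemma dist_int_unit (R : realType) (x : R) :
  0 < x < 1 -> dist_int x = Num.min x (1 - x).
Proof.
move=> /andP[x0 x1]; rewrite /dist_int.
have -> : Num.floor x = 0 by apply: floor_def; rewrite add0r (ltW x0) x1.
have -> : Num.ceil x = 1 by apply: ceil_def; rewrite subrr x0 (ltW x1).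
by rewrite subr0.
Qed.

Lemma path_leq_bounds (x : nat) (s : seq nat) :
  path leq x s -> forall v, v \in x :: s -> (x <= v <= last x s)%N.
Proof.
elim: s x => [|y s IH] x /=; first by move=> _ v; rewrite mem_seq1 => /eqP ->; rewrite leqnn.
move=> /andP[xy ps] v; rewrite inE => /orP[/eqP ->|vin].
  by have /andP[_ /(leq_trans xy) ->] := IH y ps y (mem_head y s); rewrite leqnn.
by have /andP[/(leq_trans xy) -> ->] := IH y ps v vin.
Qed.

Lemma min_dist_le1 (R : realType) (V : seq nat) (t : R) : min_dist V t <= 1.
Proof.
rewrite /min_dist; elim: V => [|v V IH]; first by rewrite big_nil.
by rewrite big_cons ge_min IH orbT.
Qed.

Lemma min_dist_ge (R : realType) (V : seq nat) (t c : R) : c <= 1 ->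
  (forall v, v \in V -> c <= dist_int (t * v%:R)) -> c <= min_dist V t.
Proof.
move=> c1 cV; rewrite /min_dist big_seq.
by apply: (big_ind (fun y => c <= y)) => // y z cy cz; rewrite le_min cy.
Qed.

Lemma kappa_ge_min_dist (R : realType) (V : seq nat) (t : R) :
  0 < t < 1 -> min_dist V t <= kappa V.
Proof.
move=> t01; apply: ub_le_sup; last by exists t.
by exists 1 => _ [s [_ ->]]; exact: min_dist_le1.
Qed.

Lemma dist_int_div_sum_ge (R : realType) (n x L v : nat) :
  (0 < x)%N -> (x <= v <= L)%N -> (L <= n * x)%N ->
  (n.+1%:R)^-1 <= dist_int (((x + L)%:R)^-1 * v%:R : R).
Proof.
move=> x0 /andP[xv vL] Lnx.
have [xR vR LR] : [/\ (1 : R) <= x%:R, (x%:R : R) <= v%:R & (v%:R : R) <= L%:R].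
  by rewrite ler1n x0 !ler_nat.
have LnxR : (L%:R : R) <= n%:R * x%:R by rewrite -natrM ler_nat.
set S : R := (x + L)%:R.
have SE : S = x%:R + L%:R by rewrite /S natrD.
have S0 : 0 < S by rewrite SE; lra.
have N0 : (0 : R) < n.+1%:R by rewrite ltr0n.
have NE : (n.+1%:R : R) = n%:R + 1 by rewrite -natr1.
rewrite mulrC dist_int_unit; last first.
  by rewrite divr_gt0 ?ltr_pdivrMr // ?mul1r; lra.
have -> : 1 - v%:R / S = (S - v%:R) / S by rewrite mulrBl divff ?gt_eqF.
by rewrite le_min !ler_pdivlMr // mulrC !ler_pdivrMr // NE SE; apply/andP; split; nra.
Qed.

Section Spread.
Variables (R : realType) (n x : nat) (s : seq nat).
Hypotheses (Vpos : posset (x :: s)) (spread : (last x s <= n * x)%N).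

Lemma posset_bounds {v} : v \in x :: s -> [/\ (0 < x)%N & (x <= v <= last x s)%N].
Proof.
case: Vpos => /= Vsorted /andP[x0 _] vV; split=> //.
by apply: path_leq_bounds vV; apply: sub_path Vsorted => p q /ltnW.
Qed.

Lemma dist_int_ge_spread v : v \in x :: s ->
  (n.+1%:R)^-1 <= dist_int (((x + last x s)%:R)^-1 * v%:R : R).
Proof. by case/posset_bounds=> x0 xvL; exact: dist_int_div_sum_ge. Qed.

Lemma kappa_ge_spread : (n.+1%:R)^-1 <= kappa (x :: s) :> R.
Proof.
have [x0 /andP[_ xL]] := posset_bounds (mem_head x s).
have S1 : (1 : R) < (x + last x s)%:R.
  by rewrite ltr1n; exact: (leq_add x0 (leq_trans x0 xL)).
have t01 : 0 < ((x + last x s)%:R : R)^-1 < 1.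
  by rewrite invr_gt0 invf_lt1 ?S1 ?(lt_trans ltr01).
apply: (le_trans _ (kappa_ge_min_dist _ _ _ t01)).
apply: min_dist_ge; last exact: dist_int_ge_spread.
by rewrite invf_le1 ?ltr0n // ler1n.
Qed.

End Spread.

Lemma posset_shift (k : nat) (V : seq nat) :
  posset V -> posset [seq (k + v)%N | v <- V].
Proof.
case=> Vsorted Vpos; split.
  by rewrite sorted_map; apply: sub_sorted Vsorted => p q; rewrite /relpre /= ltn_add2l.
by rewrite all_map; apply: sub_all Vpos => v /= v0; rewrite addn_gt0 v0 orbT.
Qed.

Lemma spread_shift (R : realFieldType) (n x L k : nat) : (1 < n)%N ->
  (L%:R - n%:R * x%:R) / n.-1%:R <= k%:R :> R -> (k + L <= n * (k + x))%N.
Proof.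
case: n => [|[|m]] // _; rewrite ler_pdivrMr ?ltr0n // lerBlDr -!natrM -natrD ler_nat.
by rewrite mulnDr mulSn -addnA leq_add2l mulnC.
Qed.

Theorem mainTheorem5 (R : realType) :
  (forall (n : nat) (V : seq nat),
     (0 < n)%N -> size V = n -> posset V ->
     (last 0 V <= n * head 0 V)%N ->
     (forall v, v \in V ->
        dist_int (((head 0 V + last 0 V)%:R)^-1 * v%:R : R) >= (n.+1%:R)^-1)
     /\ kappa V >= (n.+1%:R)^-1 :> R)
  /\
  (forall (n : nat) (V : seq nat) (a : int),
     (2 <= n)%N -> size V = n -> posset V ->
     a >= 0 ->
     (a%:~R : R) >= ((last 0 V)%:R - n%:R * (head 0 V)%:R) / (n.-1)%:R ->
     kappa [seq (`|a|%N + v)%N | v <- V] >= (n.+1%:R)^-1 :> R).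
Proof.
split=> [n [|x s] n0 sz Vpos spread|n [|x s] a n2 sz Vpos a0 ha].
- by rewrite -sz in n0.
- by split; [exact: dist_int_ge_spread | exact: kappa_ge_spread].
- by rewrite -sz in n2.
have aE : (a%:~R : R) = (`|a|%N)%:R by rewrite natr_absz ger0_norm.
rewrite aE in ha.
have /= shiftVpos := posset_shift `|a|%N _ Vpos.
apply: (kappa_ge_spread _ _ _ _ shiftVpos).
by rewrite last_map; exact: spread_shift ha.
Qed.
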